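(* Let $a\in \mathcal{A}$. Then the following are equivalent: (1) $a$ has a $w$-weighted core inverse. (2) $aw\in \mathcal{A}^{\#}$ and $waw$ has a $((aw)^{D}, ((wa)^{D})^* )$-inverse. In this case, $a^{\mathrm{core},w}=(waw)^{((aw)^{D},((wa)^D)^* )}$.
   Context: $\mathcal{A}$ is a complex Banach *-algebra with identity and $w\in\mathcal{A}$. The $w$-weighted core inverse of $a$ is the unique $x$ with $a(wx)^2=x$, $(wawx)^*=wawx$, $xw(aw)^2=aw$, denoted $a^{\mathrm{core},w}$. $\mathcal{A}^{\#}$ is the set of group invertible elements; $b^D$ denotes the Drazin inverse. For $a,b,c\in\mathcal{A}$, the $(b,c)$-inverse of $a$ is the unique $x$ (if it exists) with $xab=b$, $cax=c$, $x\in b\mathcal{A}x\cap x\mathcal{A}c$, denoted $a^{(b,c)}$. *)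

From mathcomp Require Import all_boot all_algebra.
Set Implicit Arguments. Unset Strict Implicit. Unset Printing Implicit Defensive.
Import GRing.Theory.
Local Open Scope ring_scope.

(* Ambient structure: a (unital) ring R with an involution [star]
   (additive, anti-multiplicative, involutive).  Every complex Banach
   *-algebra with identity is such a ring. *)
Definition is_involution (R : nzRingType) (star : R -> R) : Prop :=
  [/\ forall x y, star (x + y) = star x + star y,
      forall x y, star (x * y) = star y * star x &
      forall x, star (star x) = x].

Definition is_group_inverse (R : nzRingType) (a x : R) : Prop :=
  [/\ a * x * a = a, x * a * x = x & a * x = x * a].

Definition group_invertible (R : nzRingType) (a : R) : Prop :=
  exists x, is_group_inverse a x.

Definition is_drazin_inverse (R : nzRingType) (a x : R) : Prop :=
  [/\ x * a * x = x, a * x = x * a &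
      exists k : nat, a ^+ k.+1 * x = a ^+ k].

Definition is_bc_inverse (R : nzRingType) (a b c x : R) : Prop :=
  [/\ x * a * b = b, c * a * x = c,
      (exists s, x = b * s * x) & (exists t, x = x * t * c)].

Definition is_wcore_inverse (R : nzRingType) (star : R -> R) (w a x : R)
  : Prop :=
  [/\ a * (w * x) ^+ 2 = x,
      star (w * a * w * x) = w * a * w * x &
      x * w * (a * w) ^+ 2 = a * w].

(* Write t = a w and p = x w.  The equations of x = a^{core,w} give t p x = x
   and p t^2 = t, hence t p^2 = p, and then g = p^2 t is the group inverse of
   t = aw; by Cline's formula (wa)^D = w g^2 a.  The (b,c)-inverse conditions
   for waw with b = g, c = (w g^2 a)^* then become word identities in a, w, x.
   Conversely, if y is that (b,c)-inverse, y = g s y and y waw g = g give the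
   two equations of a^{core,w} not involving *, and y = y u c yields
   q q^* = q^* for q = wawy, which forces q = q^*.  Uniqueness of Drazin and
   (b,c)-inverses makes the choice of d1, d2 irrelevant and gives the formula. *)

From mathcomp Require Import all_boot all_algebra.
Import GRing.Theory.
Local Open Scope ring_scope.
Set Implicit Arguments. Unset Strict Implicit.

Section DrazinInverse.
Variables (R : nzRingType) (t d : R).
Hypothesis drazin_td : is_drazin_inverse t d.

Lemma drazin_inverse_exprMl m : d ^+ m.+1 * t ^+ m = d.
Proof.
have [dtd td_dt _] := drazin_td.
elim: m => [|m IHm]; first by rewrite mulr1.
by rewrite [d ^+ _]exprS [t ^+ _]exprSr mulrA -(mulrA d) IHm -mulrA -td_dt mulrA dtd.
Qed.

Lemma drazin_inverse_exprMr m : t ^+ m * d ^+ m.+1 = d.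
Proof.
have [dtd td_dt _] := drazin_td.
elim: m => [|m IHm]; first by rewrite mul1r.
by rewrite [t ^+ _]exprS [d ^+ _]exprSr mulrA -(mulrA t) IHm td_dt dtd.
Qed.

Lemma drazin_index : exists k, forall m, (k <= m)%N -> t ^+ m.+1 * d = t ^+ m.
Proof.
have [_ _ [k tkd]] := drazin_td.
by exists k => m /subnK <-; rewrite -addnS !exprD -mulrA tkd.
Qed.

End DrazinInverse.

Lemma drazin_inverse_unique (R : nzRingType) (t d e : R) :
  is_drazin_inverse t d -> is_drazin_inverse t e -> d = e.
Proof.
move=> Hd He; have [_ td_dt _] := Hd.
have [k Hk] := drazin_index Hd; have [l Hl] := drazin_index He.
pose m := (k + l)%N.
have d_dte : d = d * t * e.
  rewrite -{1}(drazin_inverse_exprMl Hd m) -(Hl m (leq_addl _ _)).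
  by rewrite [t ^+ m.+1]exprSr !mulrA drazin_inverse_exprMl.
have e_dte : e = d * t * e.
  have dtm : d * t ^+ m.+1 = t ^+ m.
    by rewrite (commrX _ (esym td_dt)) Hk ?leq_addr.
  rewrite -{1}(drazin_inverse_exprMr He m) -dtm [t ^+ m.+1]exprS !mulrA.
  by rewrite -(mulrA (d * t)) drazin_inverse_exprMr.
by rewrite {1}d_dte -e_dte.
Qed.

Lemma bc_inverse_unique (R : nzRingType) (a b c y y' : R) :
  is_bc_inverse a b c y -> is_bc_inverse a b c y' -> y = y'.
Proof.
case=> _ cay [s y_bsy] _ [y'ab _ _ [u y'_y'uc]].
have y'ay_y : y' * a * y = y by rewrite {1}y_bsy !mulrA y'ab -y_bsy.
have y'ay_y' : y' * a * y = y' by rewrite {1}y'_y'uc -!mulrA (mulrA c) cay mulrA -y'_y'uc.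
by rewrite -y'ay_y y'ay_y'.
Qed.

Section GroupInverse.
Variables (R : nzRingType) (t g : R).
Hypothesis group_tg : is_group_inverse t g.

Lemma group_inverse_drazin : is_drazin_inverse t g.
Proof.
have [tgt gtg tg_gt] := group_tg; split=> //; exists 1%N.
by rewrite expr2 -mulrA tg_gt mulrA tgt.
Qed.

Lemma group_inverse_sqrr : t * g ^+ 2 = g.
Proof. by have [_ gtg tg_gt] := group_tg; rewrite expr2 mulrA tg_gt gtg. Qed.

Lemma group_inverse_sqrl : g ^+ 2 * t = g.
Proof. by have [_ gtg tg_gt] := group_tg; rewrite expr2 -mulrA -tg_gt mulrA gtg. Qed.

Lemma group_inverse_mul_sqrr : g * t ^+ 2 = t.
Proof. by have [tgt _ tg_gt] := group_tg; rewrite expr2 mulrA -tg_gt tgt. Qed.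

Lemma group_inverse_mul_sqrl : t ^+ 2 * g = t.
Proof. by have [tgt _ tg_gt] := group_tg; rewrite expr2 -mulrA tg_gt mulrA tgt. Qed.

End GroupInverse.

Lemma group_inverse_sqr_mul (R : nzRingType) (t p : R) :
  t * p ^+ 2 = p -> p * t ^+ 2 = t -> is_group_inverse t (p ^+ 2 * t).
Proof.
move=> tp2 pt2; have pt_eq : p ^+ 2 * t * t = p * t.
  by rewrite -mulrA -expr2 expr2 -mulrA pt2.
split.
- by rewrite mulrA tp2 -mulrA -expr2 pt2.
- by rewrite pt_eq mulrA -(mulrA p) tp2 -expr2.
- by rewrite mulrA tp2 pt_eq.
Qed.

Lemma drazin_inverse_Cline (R : nzRingType) (b c g : R) :
  is_group_inverse (b * c) g -> is_drazin_inverse (c * b) (c * g ^+ 2 * b).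
Proof.
move=> group_g; have [_ gtg _] := group_g.
have cbD : c * b * (c * g ^+ 2 * b) = c * g * b.
  by rewrite -[in RHS](group_inverse_sqrr group_g) !mulrA.
have Dcb : c * g ^+ 2 * b * (c * b) = c * g * b.
  by rewrite -[in RHS](group_inverse_sqrl group_g) !mulrA.
split.
- rewrite Dcb; have -> : c * g * b * (c * g ^+ 2 * b) = c * (g * (b * c) * g * g) * b.
    by rewrite expr2 !mulrA.
  by rewrite gtg -expr2.
- by rewrite cbD Dcb.
- exists 2%N; rewrite exprSr -mulrA cbD.
  have -> : (c * b) ^+ 2 * (c * g * b) = c * ((b * c) ^+ 2 * g) * b.
    by rewrite !expr2 !mulrA.
  by rewrite (group_inverse_mul_sqrl group_g) expr2 !mulrA.
Qed.

Section WeightedCoreInverse.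
Variables (R : nzRingType) (star : R -> R).
Hypothesis star_involutive : is_involution star.

Lemma star_id_of_mul_star q : q * star q = star q -> star q = q.
Proof.
have [_ starM starK] := star_involutive => qq_q.
have qq_sa : star (q * star q) = q * star q by rewrite starM starK.
by rewrite -{1}qq_q -qq_sa qq_q starK.
Qed.

Variables w a : R.

Section Forward.
Variable x : R.
Hypothesis wcore_x : is_wcore_inverse star w a x.

(* Names spell words in t = a * w and p = x * w. *)
Lemma wcore_tpx z : a * (w * (x * (w * (x * z)))) = x * z.
Proof. by have [axx _ _] := wcore_x; rewrite -[in RHS]axx expr2 !mulrA. Qed.

Lemma wcore_ptt z : x * (w * (a * (w * (a * (w * z))))) = a * (w * z).
Proof.
by have [_ _ xaa] := wcore_x; rewrite [in RHS]mulrA -[in RHS]xaa expr2 !mulrA.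
Qed.

Lemma wcore_tpt z : a * (w * (x * (w * (a * (w * z))))) = a * (w * z).
Proof. by rewrite -[in LHS](wcore_ptt z) wcore_tpx wcore_ptt. Qed.

Lemma wcore_ptx z : x * (w * (a * (w * (x * z)))) = x * z.
Proof. by rewrite -[in LHS](wcore_tpx z) wcore_ptt wcore_tpx. Qed.

Lemma wcore_group_inverse : is_group_inverse (a * w) ((x * w) ^+ 2 * (a * w)).
Proof.
have [_ _ xaa] := wcore_x; apply: group_inverse_sqr_mul => //.
by rewrite expr2 -!mulrA wcore_tpx.
Qed.

Local Notation g := ((x * w) ^+ 2 * (a * w)).

(* Every rule shortens a word, and the padding with [1] lets rules ending in a
   continuation [z] also fire at the end of a word. *)
Ltac wcore_reduce :=
  rewrite -[LHS]mulr1 -[RHS]mulr1 ?expr2 -!mulrA;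
  do ?rewrite ?wcore_tpx ?wcore_ptt ?wcore_tpt ?wcore_ptx.

Lemma wcore_bc_inverse_group : is_bc_inverse (w * a * w) g (star (w * g ^+ 2 * a)) x.
Proof.
have [_ starM _] := star_involutive; have [_ sa _] := wcore_x.
split.
- by wcore_reduce.
- by rewrite -mulrA -sa -starM; congr star; wcore_reduce.
- by exists ((a * w) ^+ 2 * (x * w)); wcore_reduce.
- exists (star (w * (a * w) ^+ 2 * x)); rewrite -mulrA -starM.
  have -> : w * g ^+ 2 * a * (w * (a * w) ^+ 2 * x) = w * a * w * x by wcore_reduce.
  by rewrite sa; wcore_reduce.
Qed.

End Forward.

Section Backward.
Variables g y : R.
Hypothesis group_g : is_group_inverse (a * w) g.
Hypothesis bc_y : is_bc_inverse (w * a * w) g (star (w * g ^+ 2 * a)) y.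

Lemma bc_inverse_wcore_group : is_wcore_inverse star w a y.
Proof.
have [_ starM starK] := star_involutive.
have [ywtg _ [s y_gsy] [u y_yuc]] := bc_y; rewrite !mulrA in ywtg.
have ywtgK z : y * (w * (a * (w * (g * z)))) = g * z by rewrite !mulrA ywtg.
have tggK z : a * (w * (g * (g * z))) = g * z.
  by rewrite -[in RHS](group_inverse_sqrr group_g) expr2 !mulrA.
have tgy : a * (w * (g * y)) = y by rewrite [in LHS]y_gsy -!mulrA tggK mulrA -y_gsy.
have ywgK z : y * (w * (g * z)) = g * (g * z) by rewrite -[in LHS](tggK z) ywtgK.
split.
- by rewrite expr2 -!mulrA -{2}tgy ywtgK tgy.
- apply: star_id_of_mul_star.
  have qc : w * a * w * y * (w * g ^+ 2 * a) = w * g ^+ 2 * a.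
    by rewrite expr2 -!mulrA ywgK tggK.
  have sq : star (w * a * w * y) = w * g ^+ 2 * a * star (w * a * w * y * u).
    by rewrite {1}y_yuc !mulrA starM starK.
  by rewrite sq mulrA qc.
- have gtt : g * (a * (w * (a * w))) = a * w.
    by rewrite -[in RHS](group_inverse_mul_sqrr group_g) expr2 !mulrA.
  by rewrite expr2 -!mulrA -{1}gtt ywtgK gtt.
Qed.

End Backward.

Lemma wcore_bc_inverse x d1 d2 :
    is_wcore_inverse star w a x ->
    is_drazin_inverse (a * w) d1 -> is_drazin_inverse (w * a) d2 ->
  is_bc_inverse (w * a * w) d1 (star d2) x.
Proof.
move=> wcore_x drazin_d1 drazin_d2; have group_g := wcore_group_inverse wcore_x.
rewrite (drazin_inverse_unique drazin_d1 (group_inverse_drazin group_g)).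
rewrite (drazin_inverse_unique drazin_d2 (drazin_inverse_Cline group_g)).
exact: wcore_bc_inverse_group.
Qed.

Lemma bc_inverse_wcore y d1 d2 :
    group_invertible (a * w) ->
    is_drazin_inverse (a * w) d1 -> is_drazin_inverse (w * a) d2 ->
    is_bc_inverse (w * a * w) d1 (star d2) y ->
  is_wcore_inverse star w a y.
Proof.
case=> g group_g drazin_d1 drazin_d2.
rewrite (drazin_inverse_unique drazin_d1 (group_inverse_drazin group_g)).
rewrite (drazin_inverse_unique drazin_d2 (drazin_inverse_Cline group_g)).
exact: bc_inverse_wcore_group.
Qed.

End WeightedCoreInverse.

Theorem theorem2p7 (R : nzRingType) (star : R -> R)
  (Hstar : is_involution star) (w a : R) :
  ((exists x, is_wcore_inverse star w a x) <->
   (group_invertible (a * w) /\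
    exists d1 d2 y, [/\ is_drazin_inverse (a * w) d1,
                        is_drazin_inverse (w * a) d2 &
                        is_bc_inverse (w * a * w) d1 (star d2) y]))
  /\
  (forall x d1 d2 y,
     is_wcore_inverse star w a x ->
     is_drazin_inverse (a * w) d1 ->
     is_drazin_inverse (w * a) d2 ->
     is_bc_inverse (w * a * w) d1 (star d2) y ->
     x = y).
Proof.
split; first split.
- case=> x wcore_x; have group_g := wcore_group_inverse wcore_x.
  have drazin_d1 := group_inverse_drazin group_g.
  have drazin_d2 := drazin_inverse_Cline group_g.
  split; first by exists ((x * w) ^+ 2 * (a * w)).
  exists ((x * w) ^+ 2 * (a * w)), (w * ((x * w) ^+ 2 * (a * w)) ^+ 2 * a), x.
  by split=> //; apply: wcore_bc_inverse.
- case=> group_aw [d1 [d2 [y [drazin_d1 drazin_d2 bc_y]]]].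
  by exists y; apply: bc_inverse_wcore bc_y.
- move=> x d1 d2 y wcore_x drazin_d1 drazin_d2 bc_y.
  exact: bc_inverse_unique (wcore_bc_inverse Hstar wcore_x drazin_d1 drazin_d2) bc_y.
Qed.
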